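(* Let $g=\frac{\sqrt5-1}2$, $g\le\alpha<\beta\le1$, $x\in[\alpha-1,\alpha)$, $z\in[\beta-1,\beta)$ with $z-x\in\{0,1\}$ or $x+z\in\{0,1\}$. Let $n\ge1$ be such that $T_\alpha^{n-1}(x)<\frac{\beta}{\beta+1}$. Then there is some $k\ge1$ such that $T_\beta^k(z)-T_\alpha^n(x)\in\{0,1\}$ or $T_\alpha^n(x)+T_\beta^k(z)\in\{0,1\}$.
   Context: For $\alpha\in[\tfrac12,1]$, $T_\alpha:[\alpha-1,\alpha)\to[\alpha-1,\alpha)$ is $T_\alpha(x)=\frac1x-\lfloor\frac1x+1-\alpha\rfloor$ for $x\ne0$, $T_\alpha(0)=0$. *)

From Stdlib Require Import Reals.
Open Scope R_scope.

(* floor of a real: up r is the unique integer with r < up r <= r + 1 *)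
Definition rfloor (r : R) : R := IZR (up r - 1).

Definition T (alpha x : R) : R :=
  if Req_EM_T x 0 then 0 else / x - rfloor (/ x + 1 - alpha).

Definition g : R := (sqrt 5 - 1) / 2.

From Stdlib Require Import Reals Lra Lia Psatz.
Open Scope R_scope.

(* The orbits of x under T_alpha and of z under T_beta stay synchronised: at
   every step either the two current points agree up to sign modulo 1, or the
   T_beta-orbit is one step ahead ([lagging]).  A T_alpha-step is matched by
   zero, one or two T_beta-steps preserving this, and the lagging situation is
   only entered from a point u >= beta/(beta+1).  So the hypothesis on the
   (n-1)-st point makes the n-th one agree up to sign modulo 1 with some
   T_beta^k z, and since both lie in windows of length 1 with
   1/2 < alpha < beta <= 1, the integer involved is 0 or 1. *)

Lemma g_sqr : g * g = 1 - g.
Proof.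
  unfold g; pose proof (sqrt_sqrt 5 ltac:(lra)); nra.
Qed.

Lemma half_lt_g : 1 / 2 < g.
Proof.
  unfold g; pose proof (sqrt_sqrt 5 ltac:(lra)); pose proof (sqrt_pos 5); nra.
Qed.

Lemma golden_mean_le_mul a : g <= a -> 1 <= a * (1 + a).
Proof. intros; pose proof g_sqr; pose proof half_lt_g; nra. Qed.

Lemma rfloor_spec r : rfloor r <= r < rfloor r + 1.
Proof. unfold rfloor; rewrite minus_IZR; destruct (archimed r); simpl; lra. Qed.

Lemma rfloor_unique (m : Z) r : IZR m <= r < IZR m + 1 -> rfloor r = IZR m.
Proof.
  intros [Hlo Hhi]; unfold rfloor; destruct (archimed r).
  assert (m < up r)%Z by (apply lt_IZR; lra).
  assert (up r < m + 2)%Z by (apply lt_IZR; rewrite plus_IZR; simpl; lra).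
  f_equal; lia.
Qed.

Lemma IZR_between_m1_2 (m : Z) : -1 < IZR m < 2 -> IZR m = 0 \/ IZR m = 1.
Proof.
  intros [Hlo Hhi].
  assert (-1 < m)%Z by (apply lt_IZR; simpl; lra).
  assert (m < 2)%Z by (apply lt_IZR; simpl; lra).
  assert (m = 0 \/ m = 1)%Z as [-> | ->] by lia; simpl; auto.
Qed.

Lemma T_0 b : T b 0 = 0.
Proof. unfold T; destruct (Req_EM_T 0 0); [reflexivity | contradiction]. Qed.

Lemma T_inv_sub_int b y : y <> 0 -> exists m : Z, T b y = / y - IZR m.
Proof.
  intros Hy; unfold T; destruct (Req_EM_T y 0); [contradiction |].
  exists (up (/ y + 1 - b) - 1)%Z; reflexivity.
Qed.

Lemma T_in_domain b y : 0 < b <= 1 -> b - 1 <= T b y < b.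
Proof.
  intros Hb; unfold T; destruct (Req_EM_T y 0); [lra |].
  pose proof (rfloor_spec (/ y + 1 - b)); lra.
Qed.

Lemma iter_T_in_domain b y k : 0 < b <= 1 -> b - 1 <= y < b ->
  b - 1 <= Nat.iter k (T b) y < b.
Proof. intros Hb Hy; induction k; simpl; [| apply T_in_domain]; auto. Qed.

Lemma T_one_sub b s : 0 < b <= 1 -> 0 < s -> s * (1 + b) < b ->
  T b (1 - s) = s / (1 - s).
Proof.
  intros Hb Hs Hsb.
  assert (Hs1 : s < 1) by nra.
  unfold T; destruct (Req_EM_T (1 - s) 0); [lra |].
  assert (Hinv : / (1 - s) = 1 + s / (1 - s)) by (field; lra).
  assert (0 < s / (1 - s)) by (apply Rdiv_lt_0_compat; lra).
  assert (s / (1 - s) < b).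
  { apply (Rmult_lt_reg_r (1 - s)); [lra |].
    replace (s / (1 - s) * (1 - s)) with s by (field; lra); nra. }
  rewrite (rfloor_unique 1); rewrite Hinv; simpl; lra.
Qed.

Lemma T_T_one_sub b s : 0 < b <= 1 -> 0 < s -> s * (1 + b) < b ->
  exists c : Z, T b (T b (1 - s)) = / s - IZR c.
Proof.
  intros Hb Hs Hsb.
  assert (s < 1) by nra.
  rewrite T_one_sub by assumption.
  destruct (T_inv_sub_int b (s / (1 - s))) as [c Ec].
  { assert (0 < s / (1 - s)) by (apply Rdiv_lt_0_compat; lra); lra. }
  exists (c + 1)%Z; rewrite Ec, plus_IZR; simpl; field; lra.
Qed.

Definition congr_pm (u t : R) : Prop :=
  exists m : Z, t - u = IZR m \/ t + u = IZR m.

(* The T_beta-orbit has already reached t = 1/q (mod 1), while the T_alpha-orbit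
   sits at u = q or u = q - 1 and has yet to be mapped to 1/q (mod 1). *)
Definition lagging (b u t : R) : Prop :=
  exists q, 0 < q /\ q * b <= 1 /\ (exists m : Z, t = / q + IZR m) /\
    (u = q \/ u = q - 1).

Definition tracking (b u t : R) : Prop := congr_pm u t \/ lagging b u t.

Lemma congr_pm_T_sym a b u t : t = u \/ t = - u -> congr_pm (T a u) (T b t).
Proof.
  intros Ht; destruct (Req_EM_T u 0) as [-> | Hu].
  - replace t with 0 by lra; rewrite !T_0; exists 0%Z; left; simpl; lra.
  - destruct (T_inv_sub_int a u Hu) as [ma Ea].
    destruct (T_inv_sub_int b t ltac:(lra)) as [mb Eb].
    rewrite Ea, Eb; destruct Ht as [-> | ->].
    + exists (ma - mb)%Z; left; rewrite minus_IZR; ring.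
    + exists (- ma - mb)%Z; right; rewrite minus_IZR, opp_IZR; field; lra.
Qed.

Lemma congr_pm_T_T_one_sub a b s u : 0 < b <= 1 -> 0 < s -> s * (1 + b) < b ->
  u = s \/ u = - s -> congr_pm (T a u) (T b (T b (1 - s))).
Proof.
  intros Hb Hs Hsb Hu.
  destruct (T_T_one_sub b s Hb Hs Hsb) as [c ->].
  destruct (T_inv_sub_int a u ltac:(lra)) as [ma ->].
  destruct Hu as [-> | ->].
  - exists (ma - c)%Z; left; rewrite minus_IZR; ring.
  - exists (- (c + ma))%Z; right; rewrite opp_IZR, plus_IZR; field; lra.
Qed.

Section Tracking.

Variables a b : R.
Hypotheses (Hga : g <= a) (Hab : a < b) (Hb1 : b <= 1).

Let Ha_half : 1 / 2 < a.
Proof. pose proof half_lt_g; lra. Qed.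

Let Ha_mul : 1 <= a * (1 + a).
Proof. exact (golden_mean_le_mul a Hga). Qed.

Lemma congr_pm_exact u t : a - 1 <= u < a -> b - 1 <= t < b -> congr_pm u t ->
  t - u = 0 \/ t - u = 1 \/ u + t = 0 \/ u + t = 1.
Proof.
  intros Hu Ht [m [Hm | Hm]].
  - destruct (IZR_between_m1_2 m) as [Em | Em]; lra.
  - destruct (IZR_between_m1_2 m) as [Em | Em]; lra.
Qed.

Lemma lagging_T_one_sub u : 0 < u < a -> b <= u * (1 + b) ->
  lagging b (T a u) (T b (1 - u)).
Proof.
  intros Hu Hlarge.
  assert (Hinv : u * / u = 1) by (field; lra).
  assert (0 < / u) by (apply Rinv_0_lt_compat; lra).
  assert (1 < / u) by nra.
  assert (b * / u <= 1 + b) by nra.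
  assert (1 < / u * a) by nra.
  exists (/ u - 1); repeat split; [lra | nra | |].
  - destruct (T_inv_sub_int b (1 - u) ltac:(lra)) as [c ->].
    exists (1 - c)%Z; rewrite minus_IZR; simpl; field; lra.
  - destruct (T_inv_sub_int a u ltac:(lra)) as [m Em].
    pose proof (T_in_domain a u ltac:(lra)) as Hdom; rewrite Em in Hdom |- *.
    assert (0 < m)%Z by (apply lt_IZR; simpl; nra).
    assert (m < 3)%Z by (apply lt_IZR; simpl; nra).
    assert (m = 1 \/ m = 2)%Z as [-> | ->] by lia; simpl; [left | right]; lra.
Qed.

Lemma congr_pm_step u t : a - 1 <= u < a -> b - 1 <= t < b -> congr_pm u t ->
  exists j, (1 <= j)%nat /\
    (congr_pm (T a u) (Nat.iter j (T b) t) \/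
     b <= u * (1 + b) /\ lagging b (T a u) (Nat.iter j (T b) t)).
Proof.
  intros Hu Ht Hc.
  destruct (congr_pm_exact u t Hu Ht Hc) as [E | [E | [E | E]]].
  - exists 1%nat; split; [lia |]; left; apply congr_pm_T_sym; lra.
  - exists 2%nat; split; [lia |]; left; simpl.
    replace t with (1 - - u) by lra.
    apply congr_pm_T_T_one_sub; nra.
  - exists 1%nat; split; [lia |]; left; apply congr_pm_T_sym; lra.
  - replace t with (1 - u) by lra.
    destruct (Rlt_le_dec (u * (1 + b)) b) as [Hsmall | Hlarge].
    + exists 2%nat; split; [lia |]; left.
      apply congr_pm_T_T_one_sub; lra.
    + exists 1%nat; split; [lia |]; right; split; [exact Hlarge |].
      apply lagging_T_one_sub; lra.
Qed.

Lemma lagging_step u t : a - 1 <= u < a -> b - 1 <= t < b -> lagging b u t ->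
  congr_pm (T a u) t \/ congr_pm (T a u) (T b t).
Proof.
  intros Hu Ht [q [Hq [Hqb [[m Hm] [Eu | Eu]]]]].
  - destruct (T_inv_sub_int a q ltac:(lra)) as [ma Ea].
    left; exists (m + ma)%Z; left; rewrite Eu, Ea, Hm, plus_IZR; ring.
  - assert (Hinv : q * / q = 1) by (field; lra).
    assert (0 < / q) by (apply Rinv_0_lt_compat; lra).
    assert (b <= / q) by nra.
    assert (/ q < 1 + b) by (apply (Rmult_lt_reg_l a); nra).
    assert (Em : m = (-1)%Z).
    { assert (m < 0)%Z by (apply lt_IZR; simpl; lra).
      assert (-2 < m)%Z by (apply lt_IZR; simpl; lra).
      lia. }
    subst m; simpl in Hm.
    destruct (Req_EM_T q 1) as [Eq | Hq1].
    + left; exists 0%Z; left.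
      rewrite Eu, Eq, Rminus_diag, T_0, Hm, Eq, Rinv_1; simpl; lra.
    + assert (/ q <> 1) by (intro E; apply Hq1; nra).
      destruct (T_inv_sub_int a u ltac:(lra)) as [ma ->].
      destruct (T_inv_sub_int b t ltac:(lra)) as [mb ->].
      right; exists (-1 - ma - mb)%Z; right.
      rewrite !minus_IZR, Hm, Eu; simpl; field; repeat split; lra.
Qed.

Lemma tracking_step u t : a - 1 <= u < a -> b - 1 <= t < b -> tracking b u t ->
  exists j, tracking b (T a u) (Nat.iter j (T b) t).
Proof.
  intros Hu Ht [Hc | Hl].
  - destruct (congr_pm_step u t Hu Ht Hc) as [j [_ [H | [_ H]]]];
      exists j; [left | right]; exact H.
  - destruct (lagging_step u t Hu Ht Hl) as [H | H];
      [exists 0%nat | exists 1%nat]; left; exact H.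
Qed.

Lemma tracking_step_small u t : a - 1 <= u < a -> b - 1 <= t < b ->
  u * (1 + b) < b -> tracking b u t ->
  exists j, congr_pm (T a u) (Nat.iter j (T b) t).
Proof.
  intros Hu Ht Hsmall [Hc | Hl].
  - destruct (congr_pm_step u t Hu Ht Hc) as [j [_ [H | [H _]]]];
      [exists j; exact H | lra].
  - destruct (lagging_step u t Hu Ht Hl) as [H | H];
      [exists 0%nat | exists 1%nat]; exact H.
Qed.

Lemma tracking_iter x z : a - 1 <= x < a -> b - 1 <= z < b -> congr_pm x z ->
  forall m, exists k, (1 <= k)%nat /\
    tracking b (Nat.iter (S m) (T a) x) (Nat.iter k (T b) z).
Proof.
  intros Hx Hz Hc; induction m as [| m [k [Hk Htr]]].
  - destruct (congr_pm_step x z Hx Hz Hc) as [j [Hj H]].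
    exists j; split; [exact Hj |].
    destruct H as [H | [_ H]]; [left | right]; exact H.
  - destruct (tracking_step _ _ (iter_T_in_domain a x (S m) ltac:(lra) Hx)
      (iter_T_in_domain b z k ltac:(lra) Hz) Htr) as [j H].
    exists (j + k)%nat; split; [lia |].
    rewrite Nat.iter_add; exact H.
Qed.

End Tracking.

Theorem lemma4p3 (alpha beta x z : R) (n : nat) :
  g <= alpha -> alpha < beta -> beta <= 1 ->
  alpha - 1 <= x -> x < alpha ->
  beta - 1 <= z -> z < beta ->
  (z - x = 0 \/ z - x = 1 \/ x + z = 0 \/ x + z = 1) ->
  (1 <= n)%nat ->
  Nat.iter (n - 1) (T alpha) x < beta / (beta + 1) ->
  exists k : nat, (1 <= k)%nat /\
    (Nat.iter k (T beta) z - Nat.iter n (T alpha) x = 0 \/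
     Nat.iter k (T beta) z - Nat.iter n (T alpha) x = 1 \/
     Nat.iter n (T alpha) x + Nat.iter k (T beta) z = 0 \/
     Nat.iter n (T alpha) x + Nat.iter k (T beta) z = 1).
Proof.
  intros Ha Hab Hb Hx1 Hx2 Hz1 Hz2 Hxz Hn Hlast.
  pose proof half_lt_g as Hg_half.
  destruct n as [| n']; [lia |]; rewrite Nat.sub_1_r in Hlast; simpl pred in Hlast.
  assert (Hsmall : Nat.iter n' (T alpha) x * (1 + beta) < beta).
  { apply (Rmult_lt_compat_r (1 + beta)) in Hlast; [| lra].
    replace (beta / (beta + 1) * (1 + beta)) with beta in Hlast by (field; lra).
    exact Hlast. }
  assert (Hc : congr_pm x z).
  { destruct Hxz as [H | [H | [H | H]]];
      [exists 0%Z; left | exists 1%Z; left | exists 0%Z; right | exists 1%Z; right];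
      simpl; lra. }
  assert (Hfin : exists k, (1 <= k)%nat /\
    congr_pm (Nat.iter (S n') (T alpha) x) (Nat.iter k (T beta) z)).
  { destruct n' as [| m].
    - destruct (congr_pm_step alpha beta Ha Hab Hb x z ltac:(lra) ltac:(lra) Hc)
        as [k [Hk [H | [H _]]]]; [exists k; split; assumption | simpl in Hsmall; lra].
    - destruct (tracking_iter alpha beta Ha Hab Hb x z ltac:(lra) ltac:(lra) Hc m)
        as [k [Hk Htr]].
      destruct (tracking_step_small alpha beta Ha Hab Hb _ _
        (iter_T_in_domain alpha x (S m) ltac:(lra) ltac:(lra))
        (iter_T_in_domain beta z k ltac:(lra) ltac:(lra)) Hsmall Htr) as [j H].
      exists (j + k)%nat; split; [lia |]; rewrite Nat.iter_add; exact H. }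
  destruct Hfin as [k [Hk Hck]]; exists k; split; [exact Hk |].
  apply (congr_pm_exact alpha beta); try apply iter_T_in_domain; try lra.
  exact Hck.
Qed.
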